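(* Let $R$ be a commutative ring with identity in which the map $r \mapsto 2r$ is injective. Let $L_x, L_y \geq 1$, and let $f, g \in R[x,y]$ both have length $L_x$ in $x$ and length $L_y$ in $y$; write $h = fg$. Put $N = \lceil L_x/2 \rceil$. The polynomials $f(x,\pm x^N)$, $x^{N(L_y-1)}f(x,\pm x^{-N})$ and the analogous ones for $g$ lie in $R[x]$ and have length $N(L_y-1)+L_x$. Using the four products $h(x,\pm x^N) = f(x,\pm x^N)g(x,\pm x^N)$ and $x^{2N(L_y-1)}h(x,\pm x^{-N}) = x^{N(L_y-1)}f(x,\pm x^{-N})\cdot x^{N(L_y-1)}g(x,\pm x^{-N})$, the problem of computing $h = fg$ (the `four-point' Kronecker substitution) reduces to four multiplications of polynomials of length $\lceil L_x/2\rceil(L_y-1) + L_x$ in $R[x]$, plus $O(L_xL_y)$ additions/subtractions in $R$ and $O(L_xL_y)$ divisions by $2$ in $R$ (covering both forming the evaluations and recovering all coefficients of $h$).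
   Context: A polynomial $p \in R[x]$ is regarded as a vector of coefficients of a known length $\ell$ (the coefficient of $x^{\ell-1}$ may be zero). A bivariate $p \in R[x,y]$ is a rectangular array of coefficients with a length $\ell_x$ in $x$ and a length $\ell_y$ in $y$, written $p = \sum_{i=0}^{\ell_y-1} p_i(x) y^i$ with each $p_i \in R[x]$ of length $\ell_x$. The product $h = fg$ has length $2L_x - 1$ in $x$ and $2L_y-1$ in $y$. Division by $2$ means computing the unique $s$ with $2s = r$ for an element $r \in 2R$. *)

From mathcomp Require Import all_boot all_order all_algebra.
Set Implicit Arguments. Unset Strict Implicit. Unset Printing Implicit Defensive.
Import GRing.Theory.
Local Open Scope ring_scope.

(* Bivariate polynomials: f : {poly {poly R}} = sum_j f`_j(x) y^j.
   "length L_x in x, L_y in y" = size f <= L_y and size f`_j <= L_x for all j. *)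

(* x^{N(L-1)} f(x, s * x^{-N}) with s = (-1)^+b, for f of y-length L. *)
Definition revsubst (R : comNzRingType) (N L : nat) (b : bool)
  (f : {poly {poly R}}) : {poly R} :=
  \sum_(j < L) f`_j * (((-1) ^+ b) ^+ j *: 'X^(N * (L - 1 - j))).

(* Straight-line programs over a commutative ring R, whose only        *)
(* operations are: addition, subtraction, exact halving, and calls to  *)
(* a black-box multiplier of two univariate polynomials (given by their *)
(* coefficient lists, each required to have length M) returning all   *)
(* coefficients of the product.                                        *)
(* Registers: a growing list; each instruction appends its result(s).  *)
(* Reading a nonexistent register yields 0.                            *)
Inductive instr :=
| IAdd of nat & nat
| ISub of nat & nat
| IHalf of nat
| IMul of seq nat & seq nat.

Definition prog := seq instr.

Definition conv (R : comNzRingType) (u w : seq R) : seq R :=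
  mkseq (fun k => \sum_(a < size u) \sum_(b < size w | (a + b == k)%N)
                     u`_a * w`_b) (size u + size w).-1.

(* hv is the halving function; it is required below to satisfy
   hv (r *+ 2) = r, i.e. it computes the unique s with 2s = r on 2R. *)
Definition step (R : comNzRingType) (hv : R -> R) (regs : seq R) (i : instr)
  : seq R :=
  match i with
  | IAdd a b => rcons regs (regs`_a + regs`_b)
  | ISub a b => rcons regs (regs`_a - regs`_b)
  | IHalf a => rcons regs (hv regs`_a)
  | IMul xs ys => regs ++ conv (map (nth 0 regs) xs) (map (nth 0 regs) ys)
  end.

Definition exec (R : comNzRingType) (hv : R -> R) (P : prog) (input : seq R)
  : seq R := foldl (step hv) input P.

Definition run (R : comNzRingType) (hv : R -> R) (P : prog) (input : seq R)
  (out : seq nat) : seq R := map (nth 0 (exec hv P input)) out.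

Definition mul_ok (M : nat) (P : prog) : bool :=
  all (fun i => if i is IMul xs ys then (size xs == M) && (size ys == M)
                else true) P.

Definition n_mul (P : prog) : nat :=
  count (fun i => if i is IMul _ _ then true else false) P.
Definition n_addsub (P : prog) : nat :=
  count (fun i => match i with IAdd _ _ | ISub _ _ => true | _ => false end) P.
Definition n_half (P : prog) : nat :=
  count (fun i => if i is IHalf _ then true else false) P.

(* Coefficient list of a bivariate polynomial of x-length Lx and
   y-length Ly: entry j * Lx + i is the coefficient of x^i y^j. *)
Definition encode (R : comNzRingType) (Lx Ly : nat) (f : {poly {poly R}})
  : seq R :=
  [seq (f`_(k %/ Lx))`_(k %% Lx) | k <- iota 0 (Lx * Ly)].

(* Write f = \sum_j f_j(x) y^j.  Since every f_j has length at most Lx <= 2N, in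
   f(x, +-x^N) only f_a and f_(a-1) contribute to the coefficient of x^(aN + t), so
   the evaluations cost O(Lx Ly) additions; the same holds for the y-reversal of f,
   whose evaluation at +-x^N is x^(N(Ly-1)) f(x, +-x^(-N)) up to sign.  Half the sum
   and half the difference of h(x, x^N) and h(x, -x^N) are the parts
   \sum_(j = e mod 2) h_j x^(Nj); there h_j and h_(j+2) are 2N apart while h_j has
   length 2Lx - 1 < 4N, so the coefficient at Nj + t (t < 2N) is
   h_j[t] + h_(j-2)[t + 2N].  Hence the low half of h_j is determined once h_(j-2) is
   known, and reading the reversed product at the mirrored positions determines the
   high half of h_j from the low half of h_(j-2).  Recovering h row by row costs one
   subtraction per coefficient. *)

From mathcomp Require Import all_boot all_order all_algebra.
From mathcomp Require Import zify ring.
Set Implicit Arguments. Unset Strict Implicit. Unset Printing Implicit Defensive.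
Import GRing.Theory.
Local Open Scope ring_scope.

Section Parity.
Variable A : comNzRingType.
Implicit Types p : {poly A}.

Definition parity_eval (e : bool) (p : {poly A}) (x : A) : A :=
  if e then (odd_poly p).[x ^+ 2] * x else (even_poly p).[x ^+ 2].

Lemma horner_add_signN (e : bool) p x :
  p.[x] + (-1) ^+ e * p.[- x] = parity_eval e p x *+ 2.
Proof.
have hp y : p.[y] = (even_poly p).[y ^+ 2] + (odd_poly p).[y ^+ 2] * y.
  by rewrite -{1}[p]poly_even_odd hornerD hornerM !horner_comp hornerXn hornerX.
rewrite !hp sqrrN /parity_eval; case: e; rewrite ?expr0 ?expr1; ring.
Qed.

End Parity.

Section PolyLemmas.
Variable A : comNzRingType.
Implicit Types p q : {poly A}.

Lemma poly_sum_coef p m : (size p <= m)%N -> p = \sum_(i < m) p`_i *: 'X^i.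
Proof. by move=> pm; rewrite -poly_def -[LHS](take_poly_id pm). Qed.

Lemma scaleXnM (c d : A) i j :
  (c *: 'X^i) * (d *: 'X^j) = (c * d) *: 'X^(i + j).
Proof. by rewrite -scalerAl -scalerAr scalerA exprD. Qed.

Lemma coefM_pairs p q m n k : (size p <= m)%N -> (size q <= n)%N ->
  (p * q)`_k = \sum_(a < m) \sum_(b < n | (a + b == k)%N) p`_a * q`_b.
Proof.
move=> pm qn; rewrite {1}(poly_sum_coef pm) {1}(poly_sum_coef qn) big_distrlr /= coef_sum.
apply: eq_bigr => a _; rewrite coef_sum [RHS]big_mkcond; apply: eq_bigr => b _.
by rewrite /= scaleXnM coefZ coefXn eq_sym; case: eqP; rewrite ?mulr1 ?mulr0.
Qed.

(* For size p <= L, [rev_poly L p] is x^(L-1) p(1/x). *)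
Definition rev_poly (L : nat) p : {poly A} := \poly_(i < L) p`_(L.-1 - i).

Lemma rev_poly_sum I (r : seq I) (P : I -> {poly A}) L :
  rev_poly L (\sum_(i <- r) P i) = \sum_(i <- r) rev_poly L (P i).
Proof.
apply/polyP => k; rewrite coef_poly !coef_sum; case: ifP => kL.
  by apply: eq_bigr => i _; rewrite coef_poly kL.
by rewrite big1 // => i _; rewrite coef_poly kL.
Qed.

Lemma rev_polyZXn L (c : A) k : (k < L)%N -> rev_poly L (c *: 'X^k) = c *: 'X^(L.-1 - k).
Proof.
move=> kL; apply/polyP => i; rewrite coef_poly !coefZ !coefXn.
case: ltnP => iL; first by congr (_ * (_ %:R)); apply/eqP/eqP; lia.
by case: eqP => [|_]; rewrite ?mulr0 //; lia.
Qed.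

Lemma rev_polyM m n p q : (size p <= m)%N -> (size q <= n)%N ->
  rev_poly (m + n).-1 (p * q) = rev_poly m p * rev_poly n q.
Proof.
move=> pm qn; rewrite (poly_sum_coef pm) (poly_sum_coef qn) big_distrlr /=.
rewrite !rev_poly_sum big_distrlr /=; apply: eq_bigr => a _.
rewrite rev_poly_sum; apply: eq_bigr => b _.
have [ltam ltbn] := (ltn_ord a, ltn_ord b).
rewrite !scaleXnM !rev_polyZXn ?scaleXnM //; last by lia.
by congr (_ *: 'X^_); lia.
Qed.

(* The coefficients of F, of length at most 2m, are placed m apart, so each one
   overlaps only with its predecessor. *)
Lemma coef_horner_scaleXn (F : {poly {poly A}}) (c : A) (m a t : nat) :
  (t < m)%N -> (forall i, leq (size F`_i) (2 * m)) ->
  (F.[c *: 'X^m])`_(a * m + t)%N =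
  c ^+ a * (F`_a)`_t + (if a is a'.+1 then c ^+ a' * (F`_a')`_(t + m)%N else 0).
Proof.
move=> tm; elim/poly_ind: F a => [|F C IH] a Fsize.
  by rewrite horner0 !coef0 mulr0 add0r; case: a => // a; rewrite !coef0 mulr0.
have coefFC i : (F * 'X + C%:P)`_i = if i is i'.+1 then F`_i' else C.
  by rewrite coefD coefMX coefC; case: i => [|i] /=; rewrite ?add0r ?addr0.
have FCsize i : leq (size F`_i) (2 * m) by have := Fsize i.+1; rewrite coefFC.
rewrite hornerMXaddC coefD -scalerAr coefZ coefMXn !coefFC.
case: a => [|a]; first by rewrite mul0n add0n tm mulr0 add0r expr0 mul1r addr0.
rewrite ifF; last by lia.
have -> : (a.+1 * m + t - m = a * m + t)%N by lia.
rewrite IH // mulrDr mulrA -exprS -addrA coefFC; congr (_ + _); case: a => [|a].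
  by rewrite mulr0 add0r expr0 mul1r mul1n addnC.
rewrite [C`_ _]nth_default ?addr0 ?mulrA -?exprS //.
have := Fsize 0%N; rewrite coefFC => Cs; apply: leq_trans Cs _; rewrite !mulSn; lia.
Qed.

Lemma size_sum_scaleXn (n B w : nat) (p : nat -> {poly A}) (a : nat -> A)
    (e : nat -> nat) :
  (forall i, (i < n)%N -> (e i <= B)%N) -> (forall i, leq (size (p i)) w) ->
  (size (\sum_(i < n) p i * (a i *: 'X^(e i)))%R <= B + w)%N.
Proof.
move=> eB pw; apply: (big_ind (fun q : {poly A} => size q <= B + w)%N).
- by rewrite size_poly0.
- by move=> q r qs rs; apply: leq_trans (size_polyD _ _) _; rewrite geq_max qs rs.
move=> i _; apply: leq_trans (size_polyMleq _ _) _.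
rewrite -subn1 leq_subLR; apply: leq_trans (leq_add (pw i) (size_scale_leq _ _)) _.
by rewrite size_polyXn; have := eB i (ltn_ord i); lia.
Qed.

Lemma size_horner_scaleXn (F : {poly {poly A}}) (c : A) (m L w : nat) :
  (size F <= L)%N -> (forall i, leq (size F`_i) w) ->
  (size (F.[c *: 'X^m]) <= m * (L - 1) + w)%N.
Proof.
move=> FL Fw; rewrite horner_coef.
under eq_bigr do rewrite exprZn -exprM.
apply: (size_sum_scaleXn (p := fun i => F`_i)) => // i iF.
by apply: leq_mul => //; lia.
Qed.

Lemma coef_parity_eval (H : {poly {poly A}}) (N j t : nat) : (t < 2 * N)%N ->
  (forall i, leq (size H`_i) (4 * N)) ->
  (parity_eval (odd j) H 'X^N)`_(N * j + t)%N =
  (H`_j)`_t + (if (2 <= j)%N then (H`_(j - 2))`_(t + 2 * N)%N else 0).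
Proof.
move=> t2N Hsize; rewrite /parity_eval.
have -> : ('X^N : {poly A}) ^+ 2 = 1 *: 'X^(2 * N) by rewrite scale1r -exprM mulnC.
have [a ->] : exists a, j = (odd j + a.*2)%N by exists j./2; rewrite odd_double_half.
have sizeE i : leq (size (even_poly H)`_i) (2 * (2 * N)).
  by rewrite coef_even_poly; have := Hsize i.*2; lia.
have sizeO i : leq (size (odd_poly H)`_i) (2 * (2 * N)).
  by rewrite coef_odd_poly; have := Hsize i.*2.+1; lia.
rewrite oddD odd_double addbF; case: (odd j) => /=.
  rewrite coefMXn ifF; last by lia.
  have -> : (N * (a.*2).+1 + t - N = a * (2 * N) + t)%N by lia.
  rewrite coef_horner_scaleXn // expr1n mul1r coef_odd_poly.
  by case: a => [|a]; rewrite /= ?expr1n ?mul1r ?coef_odd_poly //;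
    congr (H`_ _`_ _ + H`_ _`_ _); lia.
have -> : (N * a.*2 + t = a * (2 * N) + t)%N by lia.
rewrite coef_horner_scaleXn // expr1n mul1r coef_even_poly.
by case: a => [|a]; rewrite /= ?expr1n ?mul1r ?coef_even_poly //;
  congr (H`_ _`_ _ + H`_ _`_ _); lia.
Qed.

Lemma coef_horner_signXn (F : {poly {poly A}}) (b : bool) (m a t : nat) :
  (t < m)%N -> (forall i, leq (size F`_i) (2 * m)) ->
  (F.[(-1) ^+ b *: 'X^m])`_(a * m + t)%N =
  ((-1) ^+ b) ^+ a *
    ((F`_a)`_t + (-1) ^+ b * (if a is a'.+1 then (F`_a')`_(t + m)%N else 0)).
Proof.
move=> tm Fsize; rewrite coef_horner_scaleXn // mulrDr.
by case: a => [|a]; rewrite ?mulr0 //; congr (_ + _); rewrite exprSr -mulrA signrMK.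
Qed.

End PolyLemmas.

Lemma size_coefM (A : comNzRingType) (F G : {poly {poly A}}) (w1 w2 k : nat) :
  (forall i, leq (size F`_i) w1) -> (forall i, leq (size G`_i) w2) ->
  leq (size (F * G)`_k) (w1 + w2).-1.
Proof.
move=> Fw Gw; rewrite coefM.
apply: (big_ind (fun p : {poly A} => leq (size p) (w1 + w2).-1)).
- by rewrite size_poly0.
- by move=> p q ps qs; apply: leq_trans (size_polyD _ _) _; rewrite geq_max ps qs.
move=> i _; apply: leq_trans (size_polyMleq _ _) _.
by rewrite -!subn1 leq_sub2r // leq_add.
Qed.

Lemma conv_mkseq_coef (A : comNzRingType) (p q : {poly A}) n :
  (size p <= n)%N -> (size q <= n)%N ->
  conv (mkseq (fun i => p`_i) n) (mkseq (fun i => q`_i) n) =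
  mkseq (fun k => (p * q)`_k) (n + n).-1.
Proof.
move=> pn qn; rewrite /conv !size_mkseq; apply: eq_mkseq => k.
rewrite (coefM_pairs _ pn qn); apply: eq_bigr => a _; apply: eq_bigr => b _.
by rewrite !nth_mkseq.
Qed.

(** * Tables of registers *)

Section Tables.
Variable T : Type.
Local Open Scope nat_scope.
Implicit Types (v : nat -> nat -> T) (n w : nat).

Definition mktable v n w : seq T := mkseq (fun p => v (p %/ w) (p %% w)) (n * w).

Lemma divmodMDl w i k : k < w -> (i * w + k) %/ w = i /\ (i * w + k) %% w = k.
Proof.
move=> kw; rewrite divnMDl ?divn_small ?addn0 ?modnMDl ?modn_small //.
exact: leq_ltn_trans (leq0n k) kw.
Qed.

Lemma size_mktable v n w : size (mktable v n w) = (n * w).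
Proof. exact: size_mkseq. Qed.

Lemma nth_mktable x0 v n w i k : i < n -> k < w ->
  nth x0 (mktable v n w) (i * w + k) = v i k.
Proof.
move=> ilt klt; rewrite nth_mkseq; last by nia.
by have [-> ->] := divmodMDl i klt.
Qed.

Lemma ltn_row_index n w i k : i < n -> k < w -> (i * w + k < n * w).
Proof.
move=> ilt klt; apply: (@leq_trans (i.+1 * w)); first by rewrite mulSn addnC ltn_add2r.
by rewrite leq_mul2r ilt orbT.
Qed.

Lemma nth_cat_mktable x0 s v n w i k : i < n -> k < w ->
  nth x0 (s ++ mktable v n w) (size s + (i * w + k)) = v i k.
Proof. by move=> ilt klt; rewrite nth_cat ltnNge leq_addr /= addKn nth_mktable. Qed.

Lemma eq_in_mkseq (f f' : nat -> T) n :
  (forall i, i < n -> f i = f' i) -> mkseq f n = mkseq f' n.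
Proof. by move=> ff'; apply/eq_in_map => i; rewrite mem_iota => /ff'. Qed.

Lemma eq_in_mktable v v' n w :
  (forall i k, i < n -> k < w -> v i k = v' i k) ->
  mktable v n w = mktable v' n w.
Proof.
move=> vv'; apply: eq_in_mkseq => p pnw.
have w_gt0 : 0 < w by rewrite lt0n; apply: contraTneq pnw => ->; rewrite muln0.
by apply: vv'; rewrite ?ltn_pmod // ltn_divLR.
Qed.

Lemma mktableSr v n w : mktable v n.+1 w = mktable v n w ++ mkseq (v n) w.
Proof.
rewrite /mktable /mkseq mulSn addnC iotaD map_cat; congr (_ ++ _).
rewrite add0n -[n * w]addn0 iotaDl -map_comp; apply/eq_in_map => k.
rewrite mem_iota add0n => /andP[_ klt] /=.
by have [-> ->] := divmodMDl n klt.
Qed.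

Lemma all_mktable (a : pred T) v n w :
  (forall i k, a (v i k)) -> all a (mktable v n w).
Proof. by move=> aP; rewrite all_map; apply/allP => p _; exact: aP. Qed.

Lemma count_mktable (a : pred T) (b : bool) v n w :
  (forall i k, a (v i k) = b) -> count a (mktable v n w) = (b * (n * w)).
Proof.
move=> ab; rewrite /mktable /mkseq count_map (eq_count (a2 := fun=> b)) => [|p /=].
  by case: b {ab}; rewrite ?count_predT ?count_pred0 ?size_iota ?mul1n.
exact: ab.
Qed.

End Tables.

Lemma map_mktable (T U : Type) (F : T -> U) (v : nat -> nat -> T) n w :
  map F (mktable v n w) = mktable (fun i k => F (v i k)) n w.
Proof. by rewrite /mktable /mkseq -map_comp. Qed.

Lemma encode_mktable (R : comNzRingType) (a b : nat) (F : {poly {poly R}}) :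
  encode a b F = mktable (fun j i => (F`_j)`_i) b a.
Proof. by rewrite /encode /mktable /mkseq mulnC. Qed.

(** * Straight-line programs *)

Definition add_or_sub (neg : bool) : nat -> nat -> instr := if neg then ISub else IAdd.

Section Machine.
Variables (R : comNzRingType) (hv : R -> R).

Definition value_of (regs : seq R) (i : instr) : R :=
  match i with
  | IAdd a b => regs`_a + regs`_b
  | ISub a b => regs`_a - regs`_b
  | IHalf a => hv regs`_a
  | IMul _ _ => 0
  end.

Definition reads_below (n : nat) (i : instr) : bool :=
  match i with
  | IAdd a b | ISub a b => (a < n)%N && (b < n)%N
  | IHalf a => (a < n)%N
  | IMul _ _ => false
  end.

Lemma reads_belowW m n i : (m <= n)%N -> reads_below m i -> reads_below n i.
Proof.
move=> mn; have lt a : (a < m)%N -> (a < n)%N by move=> /leq_trans; apply.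
by case: i => [a b|a b|a|//] /= => [/andP[/lt -> /lt ->]|/andP[/lt -> /lt ->]|/lt].
Qed.

Lemma value_add_or_sub s (neg : bool) a b :
  value_of s (add_or_sub neg a b) = s`_a + (-1) ^+ neg * s`_b.
Proof. by case: neg; rewrite /= ?expr0 ?mul1r ?expr1 ?mulN1r. Qed.

Lemma reads_below_add_or_sub n (neg : bool) a b :
  reads_below n (add_or_sub neg a b) = (a < n)%N && (b < n)%N.
Proof. by case: neg. Qed.

Lemma value_of_ISub s a b : value_of s (ISub a b) = s`_a - s`_b.
Proof. by []. Qed.

Lemma value_signed_pair s (b : bool) (a A B : nat) :
  value_of s (if b && odd a then ISub B A else add_or_sub b A B) =
  ((-1) ^+ b) ^+ a * (s`_A + (-1) ^+ b * s`_B).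
Proof.
case: b => /=; last by rewrite expr0 expr1n !mul1r.
rewrite expr1 -signr_odd; case: (odd a) => /=.
  by rewrite !mulN1r opprD opprK addrC.
by rewrite expr0 !mul1r mulN1r.
Qed.

Lemma exec_cat P Q regs : exec hv (P ++ Q) regs = exec hv Q (exec hv P regs).
Proof. exact: foldl_cat. Qed.

Lemma value_of_cat i s t m : reads_below m i -> (m <= size s)%N ->
  value_of (s ++ t) i = value_of s i.
Proof.
have nth_s a : (a < m)%N -> (m <= size s)%N -> (s ++ t)`_a = s`_a.
  by move=> am ms; rewrite nth_cat (leq_trans am ms).
by case: i => [a b|a b|a|//] /= => [/andP[am bm]|/andP[am bm]|am] ms; rewrite !nth_s.
Qed.

Lemma step_reads_below s i : reads_below (size s) i ->
  step hv s i = rcons s (value_of s i).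
Proof. by case: i. Qed.

Lemma exec_mkseq regs (ins : nat -> instr) (v : nat -> R) n :
  (forall k, (k < n)%N -> reads_below (size regs + k) (ins k) /\
     value_of (regs ++ mkseq v n) (ins k) = v k) ->
  exec hv (mkseq ins n) regs = regs ++ mkseq v n.
Proof.
elim: n => [|n IH] insP; first by rewrite cats0.
have regsS : regs ++ mkseq v n.+1 = (regs ++ mkseq v n) ++ [:: v n].
  by rewrite mkseqS -cats1 catA.
have [rn vn] := insP n (ltnSn n).
rewrite mkseqS /exec foldl_rcons -/(exec _ _ _) IH => [|k kn]; last first.
  have [rk vk] := insP k (ltnW kn); split=> //.
  by rewrite -vk regsS [RHS](value_of_cat _ rk) // size_cat size_mkseq leq_add2l ltnW.
rewrite /= step_reads_below; last by rewrite size_cat size_mkseq.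
rewrite mkseqS rcons_cat; congr (_ ++ rcons _ _).
by rewrite -vn regsS [RHS](value_of_cat _ rn) // size_cat size_mkseq.
Qed.

Lemma exec_mktable regs (ins : nat -> nat -> instr) (v : nat -> nat -> R) n w :
  (forall i k, (i < n)%N -> (k < w)%N ->
     reads_below (size regs + (i * w + k)) (ins i k) /\
     value_of (regs ++ mktable v n w) (ins i k) = v i k) ->
  exec hv (mktable ins n w) regs = regs ++ mktable v n w.
Proof.
move=> insP; apply: exec_mkseq => p pnw.
have w_gt0 : (0 < w)%N by rewrite lt0n; apply: contraTneq pnw => ->; rewrite muln0.
by rewrite {1}(divn_eq p w); apply: insP; rewrite ?ltn_pmod // ltn_divLR.
Qed.

Lemma exec_mul_block regs (xs ys : nat -> seq nat) (v : nat -> nat -> R) n w :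
  (forall c, (c < n)%N -> all (gtn (size regs)) (xs c ++ ys c) /\
     conv (map (nth 0 regs) (xs c)) (map (nth 0 regs) (ys c)) = mkseq (v c) w) ->
  exec hv (mkseq (fun c => IMul (xs c) (ys c)) n) regs = regs ++ mktable v n w.
Proof.
elim: n => [|n IH] mulP; first by rewrite cats0.
rewrite mkseqS /exec foldl_rcons -/(exec _ _ _) IH => [|c cn]; last exact: mulP (ltnW cn).
have [] := mulP n (ltnSn n); rewrite all_cat => /andP[/allP xsP /allP ysP] convP.
have nth_regs (s : seq nat) : {subset s <= gtn (size regs)} ->
    map (nth 0 (regs ++ mktable v n w)) s = map (nth 0 regs) s.
  by move=> sP; apply/eq_in_map => a /sP aR; rewrite /= nth_cat ifT.
by rewrite /= !nth_regs // convP mktableSr catA.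
Qed.

End Machine.

(** * The four-point Kronecker program *)

Section Kronecker.
Variables Lx Ly : nat.
Local Open Scope nat_scope.

Let N := uphalf Lx.
Let M := N * (Ly - 1) + Lx.
Let M2 := 2 * M - 1.
Let J := 2 * Ly - 1.

(* Register layout: the coefficients of f and g (as listed by [encode]), a zero
   register, the 8 evaluations (length M), the 4 products (length M2 = 2M - 1),
   their 4 sums or differences, the 4 halves of these, and J rows of 4N output
   coefficients. *)
Definition zero_reg := 2 * (Lx * Ly).
Definition eval_base := zero_reg.+1.
Definition prod_base := eval_base + 8 * M.
Definition sum_base := prod_base + 4 * M2.
Definition half_base := sum_base + 4 * M2.
Definition out_base := half_base + 4 * M2.

Definition input_reg (w rv : bool) (j i : nat) : nat :=
  if (j < Ly) && (i < Lx)
  then (if w then Lx * Ly else 0) + ((if rv then Ly.-1 - j else j) * Lx + i)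
  else zero_reg.

(* Row r = w + 2b + 4rv evaluates operand w (f or g, reversed in y when rv) at
   y = (-1)^b x^N.  With q = aN + t its entry is
   ((-1)^b)^a (F_a[t] + (-1)^b F_(a-1)[t + N]). *)
Definition eval_instr (r q : nat) : instr :=
  let w := odd r in let b := odd r./2 in let rv := odd r./2./2 in
  let a := q %/ N in let t := q %% N in
  let A := input_reg w rv a t in
  let B := if a is a'.+1 then input_reg w rv a' (t + N) else zero_reg in
  if b && odd a then ISub B A else add_or_sub b A B.

Definition eval_reg (r q : nat) : nat := eval_base + (r * M + q).

Definition mul_instr (c : nat) : instr :=
  IMul (mkseq (eval_reg c.*2) M) (mkseq (eval_reg c.*2.+1) M).

Definition prod_reg (c k : nat) : nat := prod_base + (c * M2 + k).

(* Row d = e + 2rv: the product at y = x^N plus (-1)^e times that at y = -x^N. *)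
Definition sum_instr (d k : nat) : instr :=
  add_or_sub (odd d) (prod_reg (d./2).*2 k) (prod_reg (d./2).*2.+1 k).

Definition half_instr (d k : nat) : instr := IHalf (sum_base + (d * M2 + k)).

Definition half_reg (d k : nat) : nat :=
  if k < M2 then half_base + (d * M2 + k) else zero_reg.

Definition out_reg (j t : nat) : nat := out_base + (j * (4 * N) + t).

Definition prev_reg (j t : nat) : nat := if 2 <= j then out_reg (j - 2) t else zero_reg.

(* Row j receives h_j.  The low half t < 2N is read from the forward parity part at
   Nj + t, the high half from the reversed one at N(J-1-j) + t; in both cases the
   overlapping coefficient of h_(j-2), found two rows earlier, is subtracted. *)
Definition recover_instr (j t : nat) : instr :=
  if 2 * N <= t
  then ISub (half_reg (odd j + 2) (N * (J.-1 - j) + t)) (prev_reg j (t - 2 * N))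
  else ISub (half_reg (odd j) (N * j + t)) (prev_reg j (t + 2 * N)).

Definition kronecker_prog : prog :=
  (* [ISub 0 0] creates the zero register. *)
  ISub 0 0 :: mktable eval_instr 8 M ++ mkseq mul_instr 4 ++
  mktable sum_instr 4 M2 ++ mktable half_instr 4 M2 ++ mktable recover_instr J (4 * N).

Definition kronecker_out : seq nat := mktable out_reg J (2 * Lx - 1).

Lemma kronecker_prog_counts :
  [/\ mul_ok M kronecker_prog, n_mul kronecker_prog = 4,
      n_addsub kronecker_prog = 1 + 8 * M + 4 * M2 + J * (4 * N) &
      n_half kronecker_prog = 4 * M2].
Proof.
rewrite /kronecker_prog.
have -> : mkseq mul_instr 4 = [:: mul_instr 0; mul_instr 1; mul_instr 2; mul_instr 3] by [].
rewrite /mul_ok /n_mul /n_addsub /n_half /mul_instr /=.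
rewrite !all_cat !count_cat /= !all_cat !count_cat.
rewrite !size_mkseq eqxx /= !all_mktable => [|i k|i k|i k|i k]; first last.
- by rewrite /eval_instr /add_or_sub; repeat case: ifP.
- by rewrite /sum_instr /add_or_sub; case: ifP.
- by [].
- by rewrite /recover_instr; case: ifP.
split=> //.
- by rewrite !(count_mktable (b := false)) // => i k;
    rewrite /eval_instr /sum_instr /recover_instr /add_or_sub; repeat case: ifP.
- rewrite (count_mktable (v := half_instr) (b := false)) //.
  rewrite !(count_mktable (b := true)) => [|i k|i k|i k]; first lia;
    by rewrite /eval_instr /sum_instr /recover_instr /add_or_sub; repeat case: ifP.
rewrite (count_mktable (v := half_instr) (b := true)) //.
rewrite !(count_mktable (b := false)) => [|i k|i k|i k]; first lia;
  by rewrite /eval_instr /sum_instr /recover_instr /add_or_sub; repeat case: ifP.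
Qed.

Lemma kronecker_cost : 0 < Lx -> 0 < Ly ->
  1 + 8 * M + 4 * M2 + J * (4 * N) <= 25 * Lx * Ly /\ 4 * M2 <= 25 * Lx * Ly.
Proof.
move=> Lx_gt0 Ly_gt0; have NLx : N <= Lx by rewrite /N; lia.
have MLL : M <= Lx * Ly.
  have -> : Lx * Ly = Lx * (Ly - 1) + Lx by rewrite -mulnSr subn1 prednK.
  by rewrite /M leq_add2r leq_mul.
have JN : J * (4 * N) <= (2 * Ly) * (4 * Lx) by apply: leq_mul; rewrite /J; lia.
rewrite /M2; split; lia.
Qed.

(** * Correctness *)

Section Correctness.
Local Open Scope ring_scope.
Variables (R : comNzRingType) (hv : R -> R).
Hypothesis hvK : forall r : R, hv (r *+ 2) = r.
Hypotheses (Lx_gt0 : (0 < Lx)%N) (Ly_gt0 : (0 < Ly)%N).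
Variables f g : {poly {poly R}}.
Hypotheses (f_size : (size f <= Ly)%N) (g_size : (size g <= Ly)%N).
Hypotheses (f_coef_size : forall j, leq (size f`_j) Lx)
           (g_coef_size : forall j, leq (size g`_j) Lx).

Let h := f * g.

Fact N_gt0 : (0 < N)%N. Proof. rewrite /N; lia. Qed.
Fact N_bounds : (N <= Lx <= 2 * N)%N. Proof. rewrite /N; lia. Qed.

(* Evaluating [operand w true] at y = +-x^N gives x^(N(Ly-1)) f(x, +-x^(-N)) up to
   the sign (+-1)^(Ly-1), which cancels in the product. *)
Definition operand (w rv : bool) : {poly {poly R}} :=
  let F := if w then g else f in if rv then rev_poly Ly F else F.

Definition product (rv : bool) : {poly {poly R}} := if rv then rev_poly J h else h.

Lemma operand_size w rv : (size (operand w rv) <= Ly)%N.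
Proof. by rewrite /operand; case: rv; [exact: size_poly | case: w]. Qed.

Lemma operand_coef_size w rv j : leq (size (operand w rv)`_j) Lx.
Proof.
rewrite /operand; case: rv; last by case: w.
by rewrite coef_poly; case: ifP; rewrite ?size_poly0 //; case: w.
Qed.

Lemma operandM rv : operand false rv * operand true rv = product rv.
Proof.
case: rv => //=; rewrite -rev_polyM //.
by congr rev_poly; rewrite /J; lia.
Qed.

Lemma product_coef_size rv j : leq (size (product rv)`_j) (4 * N).
Proof.
have hj i : leq (size h`_i) (4 * N).
  apply: leq_trans (size_coefM _ f_coef_size g_coef_size) _.
  by have := N_bounds; lia.
by rewrite /product; case: rv => //; rewrite coef_poly; case: ifP; rewrite ?size_poly0.
Qed.

Lemma size_eval_operand w rv (b : bool) :
  (size (operand w rv).[(-1) ^+ b *: 'X^N] <= M)%N.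
Proof. exact: size_horner_scaleXn (operand_size w rv) (operand_coef_size w rv). Qed.

Lemma size_eval_product rv (b : bool) :
  (size (product rv).[(-1) ^+ b *: 'X^N] <= M2)%N.
Proof.
rewrite -operandM hornerM; apply: leq_trans (size_polyMleq _ _) _.
by rewrite /M2 -subn1 leq_sub2r // mul2n -addnn leq_add // size_eval_operand.
Qed.

Definition eval_value (r q : nat) : R :=
  ((operand (odd r) (odd r./2./2)).[(-1) ^+ odd r./2 *: 'X^N])`_q.

Definition prod_value (c k : nat) : R :=
  ((product (odd c./2)).[(-1) ^+ odd c *: 'X^N])`_k.

Definition half_value (d k : nat) : R :=
  (parity_eval (odd d) (product (odd d./2)) 'X^N)`_k.

Definition out_value (j t : nat) : R := (h`_j)`_t.

Let S0 := encode Lx Ly f ++ encode Lx Ly g.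
Let S1 := rcons S0 0.
Let S2 := S1 ++ mktable eval_value 8 M.
Let S3 := S2 ++ mktable prod_value 4 M2.
Let S4 := S3 ++ mktable (fun d k => half_value d k *+ 2) 4 M2.
Let S5 := S4 ++ mktable half_value 4 M2.
Let S6 := S5 ++ mktable out_value J (4 * N).

Lemma size_S0 : size S0 = zero_reg.
Proof. by rewrite size_cat !encode_mktable !size_mktable /zero_reg; lia. Qed.

Lemma size_S1 : size S1 = eval_base.
Proof. by rewrite size_rcons size_S0. Qed.

Lemma size_states : [/\ size S2 = prod_base, size S3 = sum_base, size S4 = half_base
  & size S5 = out_base].
Proof. by rewrite !size_cat !size_mktable size_S1. Qed.

Lemma nth_S1_zero : S1`_zero_reg = 0.
Proof. by rewrite nth_rcons size_S0 ltnn eqxx. Qed.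

Lemma nth_S1_input w rv j i : S1`_(input_reg w rv j i) = ((operand w rv)`_j)`_i.
Proof.
rewrite /input_reg; case: ifP => [/andP[jLy iLx]|]; last first.
  move/negbT; rewrite negb_and -!leqNgt nth_S1_zero => /orP[Lyj|Lxi].
    rewrite [(operand w rv)`_j]nth_default ?coef0 //.
    exact: leq_trans (operand_size w rv) Lyj.
  by rewrite nth_default //; apply: leq_trans (operand_coef_size w rv j) Lxi.
have [j' [j'Ly -> ->]] : exists j', [/\ (j' < Ly)%N,
    (if rv then Ly.-1 - j else j)%N = j' & (operand w rv)`_j = (if w then g else f)`_j'].
  exists (if rv then Ly.-1 - j else j)%N; rewrite /operand.
  by case: rv; rewrite ?coef_poly ?jLy; split=> //; lia.
rewrite nth_rcons size_S0 ifT; last by rewrite /zero_reg; case: w; nia.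
rewrite /S0 !encode_mktable; case: w => /=.
  by rewrite nth_cat size_mktable mulnC ltnNge leq_addr /= addKn nth_mktable.
by rewrite nth_cat size_mktable ifT ?nth_mktable //; nia.
Qed.

Lemma input_reg_lt w rv j i : (input_reg w rv j i < eval_base)%N.
Proof.
rewrite /input_reg /eval_base /zero_reg; case: ifP => // /andP[jLy iLx].
have : ((if rv then Ly.-1 - j else j) < Ly)%N by case: rv; lia.
by case: w; nia.
Qed.

Lemma eval_instr_value r q : value_of hv S1 (eval_instr r q) = eval_value r q.
Proof.
rewrite /eval_instr /eval_value [in RHS](divn_eq q N) value_signed_pair.
rewrite coef_horner_signXn ?ltn_pmod ?N_gt0 // => [|i]; last first.
  by apply: leq_trans (operand_coef_size _ _ i) _; have := N_bounds; lia.
rewrite !nth_S1_input; congr (_ * (_ + _ * _)).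
by case: (q %/ N)%N => [|a]; rewrite ?nth_S1_zero ?nth_S1_input.
Qed.

Lemma exec_eval : exec hv (mktable eval_instr 8 M) S1 = S2.
Proof.
apply: exec_mktable => r q _ _; have rb : reads_below eval_base (eval_instr r q).
  rewrite /eval_instr /=; case: (q %/ N)%N => [|a]; case: ifP => _;
    by rewrite /= ?reads_below_add_or_sub !input_reg_lt ?ltnSn.
split; first by apply: reads_belowW rb; rewrite size_S1 leq_addr.
by rewrite (value_of_cat hv _ rb) ?size_S1 // eval_instr_value.
Qed.

Lemma exec_mul : exec hv (mkseq mul_instr 4) S2 = S3.
Proof.
have [sizeS2 _ _ _] := size_states.
apply: exec_mul_block => c c4; rewrite /eval_reg.
have evalE (w : bool) : map (nth 0 S2) (mkseq (eval_reg (w + c.*2)) M) =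
    mkseq (fun q => ((operand w (odd c./2)).[(-1) ^+ odd c *: 'X^N])`_q) M.
  rewrite /mkseq -map_comp; apply: eq_in_mkseq => q qM.
  rewrite /= /eval_reg -size_S1 nth_cat_mktable; last by rewrite qM.
  - by rewrite /eval_value half_bit_double oddD odd_double addbF oddb.
  by case: w; rewrite /= ?odd_double ?doubleK ?uphalf_double; lia.
split.
  rewrite all_cat; apply/andP; split; apply/allP => x /mapP[q];
    by rewrite mem_iota sizeS2 /prod_base => /andP[_ qM] ->; rewrite /= ltn_add2l; nia.
rewrite (evalE false) (evalE true) conv_mkseq_coef ?size_eval_operand //.
by rewrite -hornerM operandM /M2; congr mkseq; lia.
Qed.

Lemma sum_value_coef d k :
  prod_value (d./2).*2 k + (-1) ^+ odd d * prod_value (d./2).*2.+1 k =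
  half_value d k *+ 2.
Proof.
rewrite /prod_value /half_value -coefMn -horner_add_signN.
rewrite doubleK -uphalfE uphalf_double oddS odd_double.
rewrite [(-1) ^+ false *: _]scale1r [(-1) ^+ (~~ false) *: _]scaleN1r coefD.
by case: (odd d); rewrite ?expr0 ?mul1r ?expr1 ?mulN1r ?coefN.
Qed.

Lemma exec_sum : exec hv (mktable sum_instr 4 M2) S3 = S4.
Proof.
have [_ sizeS3 _ _] := size_states.
apply: exec_mktable => d k d4 kM2.
have prod_lt (b : bool) : (prod_reg (b + (d./2).*2) k < size S3)%N.
  by rewrite sizeS3 /sum_base /prod_reg ltn_add2l ltn_row_index //; case: b; lia.
have rb : reads_below (size S3) (sum_instr d k).
  by rewrite /sum_instr reads_below_add_or_sub (prod_lt false) (prod_lt true).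
split; first by apply: reads_belowW rb; rewrite leq_addr.
rewrite (value_of_cat hv _ rb) // value_add_or_sub -sum_value_coef /prod_reg.
have [sizeS2 _ _ _] := size_states.
by rewrite -sizeS2 !nth_cat_mktable //; case: (odd d./2); lia.
Qed.

Lemma exec_half : exec hv (mktable half_instr 4 M2) S4 = S5.
Proof.
have [_ sizeS3 sizeS4 _] := size_states.
apply: exec_mktable => d k d4 kM2.
have rb : reads_below (size S4) (half_instr d k).
  by rewrite /= sizeS4 /half_base ltn_add2l ltn_row_index.
split; first by apply: reads_belowW rb; rewrite leq_addr.
by rewrite (value_of_cat hv _ rb) //= -sizeS3 nth_cat_mktable.
Qed.

Lemma nth_S6_prefix i : (i < eval_base)%N -> S6`_i = S1`_i.
Proof. by rewrite /S6 /S5 /S4 /S3 /S2 -!catA nth_cat size_S1 => ->. Qed.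

Lemma half_value_ge d k : (M2 <= k)%N -> half_value d k = 0.
Proof.
move=> M2k; rewrite -[LHS]hvK /half_value -coefMn -horner_add_signN coefD.
have := size_eval_product (odd d./2) false; have := size_eval_product (odd d./2) true.
rewrite [(-1) ^+ false *: _]scale1r [(-1) ^+ (~~ false) *: _]scaleN1r => sN sP.
have -> : ((-1) ^+ odd d * (product (odd d./2)).[- 'X^N])`_k = 0.
  by case: (odd d); rewrite ?mul1r ?mulN1r ?coefN nth_default ?oppr0 // (leq_trans sN).
rewrite nth_default ?addr0; last exact: leq_trans sP M2k.
by have := hvK 0; rewrite mul0rn.
Qed.

Lemma leq_eval_out_base : (eval_base <= out_base)%N.
Proof. by rewrite /out_base /half_base /sum_base /prod_base -!addnA leq_addr. Qed.

Lemma nth_S6_half d pos : (d < 4)%N -> S6`_(half_reg d pos) = half_value d pos.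
Proof.
move=> d4; have [_ _ sizeS4 sizeS5] := size_states; rewrite /half_reg; case: ltnP => posM2.
  rewrite /S6 nth_cat sizeS5 /out_base ltn_add2l ltn_row_index //.
  by rewrite -sizeS4 nth_cat_mktable.
by rewrite nth_S6_prefix ?nth_S1_zero ?half_value_ge.
Qed.

Lemma nth_S6_out j t : (j < J)%N -> (t < 4 * N)%N -> S6`_(out_reg j t) = out_value j t.
Proof.
by have [_ _ _ sizeS5] := size_states; rewrite /out_reg -sizeS5; apply: nth_cat_mktable.
Qed.

Lemma nth_S6_prev j t : (j < J)%N -> (t < 4 * N)%N ->
  S6`_(prev_reg j t) = if (2 <= j)%N then out_value (j - 2) t else 0.
Proof.
move=> jJ t4N; rewrite /prev_reg; case: ifP => j2; first by rewrite nth_S6_out //; lia.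
by rewrite nth_S6_prefix ?nth_S1_zero.
Qed.

Lemma recover_instr_value j t : (j < J)%N -> (t < 4 * N)%N ->
  value_of hv S6 (recover_instr j t) = out_value j t.
Proof.
move=> jJ t4N; have hsize := product_coef_size.
rewrite /recover_instr /out_value; case: leqP => tN; rewrite value_of_ISub; last first.
  rewrite nth_S6_half ?nth_S6_prev; [|lia|lia|by case: (odd j)].
  rewrite /half_value /out_value oddb; have -> : ((odd j)./2 = 0)%N by case: (odd j).
  by rewrite coef_parity_eval // addrK.
rewrite nth_S6_half ?nth_S6_prev; [|lia|lia|by case: (odd j)].
rewrite /half_value /out_value.
have [-> ->] : odd (odd j + 2) = odd j /\ ((odd j + 2)./2 = 1)%N by case: (odd j).
have -> : (N * (J.-1 - j) + t = N * (J.+1 - j) + (t - 2 * N))%N.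
  rewrite (_ : J.+1 - j = J.-1 - j + 2)%N ?mulnDr -?addnA ?[(N * 2)%N]mulnC ?subnKC //.
  by rewrite /J; lia.
have oddE : odd (J.+1 - j) = odd j by rewrite oddB /J; [rewrite addbC; lia|lia].
rewrite -oddE coef_parity_eval ?hsize //; last by lia.
rewrite /product !coef_poly.
have -> : (1 < J.+1 - j)%N by lia.
have -> : (J.+1 - j - 2 < J)%N by lia.
have -> : (J.-1 - (J.+1 - j - 2) = j)%N by lia.
rewrite subnK //; case: (leqP 2 j) => j2.
  have -> : (J.+1 - j < J)%N by lia.
  have -> : (J.-1 - (J.+1 - j) = j - 2)%N by lia.
  by rewrite addrAC subrr add0r.
have -> : (J.+1 - j < J)%N = false by lia.
by rewrite coef0 add0r subr0.
Qed.

Lemma exec_recover : exec hv (mktable recover_instr J (4 * N)) S5 = S6.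
Proof.
have [_ _ _ sizeS5] := size_states.
apply: exec_mktable => j t jJ t4N; split; last exact: recover_instr_value.
have half_lt d pos : (d < 4)%N -> (half_reg d pos < size S5 + (j * (4 * N) + t))%N.
  move=> d4; apply: (leq_trans _ (leq_addr _ _)); rewrite /half_reg sizeS5.
  case: ifP => posM2.
    by rewrite /out_base ltn_add2l ltn_row_index.
  exact: leq_trans leq_eval_out_base.
have prev_lt t' : (t' < 4 * N)%N -> (prev_reg j t' < size S5 + (j * (4 * N) + t))%N.
  move=> t'4N; rewrite /prev_reg sizeS5; case: ifP => j2.
    rewrite /out_reg ltn_add2l; apply: leq_trans (ltn_row_index (n := j.-1) _ t'4N) _.
      by lia.
    by apply: (leq_trans _ (leq_addr t _)); rewrite leq_mul2r leq_pred orbT.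
  by apply: leq_trans (leq_addr _ _); apply: leq_trans leq_eval_out_base.
by rewrite /recover_instr; case: ifP => tN /=; rewrite half_lt ?prev_lt //; lia.
Qed.

Lemma exec_kronecker : exec hv kronecker_prog S0 = S6.
Proof.
rewrite /kronecker_prog -cat1s exec_cat.
have -> : exec hv [:: ISub 0 0] S0 = S1 by rewrite /= subrr.
by rewrite !exec_cat exec_eval exec_mul exec_sum exec_half exec_recover.
Qed.

Lemma run_kronecker :
  run hv kronecker_prog (encode Lx Ly f ++ encode Lx Ly g) kronecker_out =
  encode (2 * Lx - 1) (2 * Ly - 1) h.
Proof.
rewrite /run exec_kronecker /kronecker_out map_mktable encode_mktable.
apply: eq_in_mktable => j i jJ iLx; rewrite nth_S6_out //.
by have := N_bounds; lia.
Qed.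

End Correctness.

End Kronecker.

Theorem proposition2p4 :
  exists C : nat,
  forall Lx Ly : nat, (1 <= Lx)%N -> (1 <= Ly)%N ->
  let N := uphalf Lx in
  let M := (N * (Ly - 1) + Lx)%N in
  (forall (R : comNzRingType) (f : {poly {poly R}}),
     (size f <= Ly)%N -> (forall j, leq (size f`_j) Lx) ->
     forall b : bool,
       (size (f.[(-1) ^+ b *: 'X^N]) <= M)%N /\
       (size (revsubst N Ly b f) <= M)%N) /\
  exists (P : prog) (out : seq nat),
    [/\ mul_ok M P, (n_mul P <= 4)%N,
        (n_addsub P <= C * Lx * Ly)%N, (n_half P <= C * Lx * Ly)%N &
    forall R : comNzRingType,
      injective (fun r : R => r *+ 2) ->
      forall hv : R -> R, (forall r : R, hv (r *+ 2) = r) ->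
      forall f g : {poly {poly R}},
        (size f <= Ly)%N -> (forall j, leq (size f`_j) Lx) ->
        (size g <= Ly)%N -> (forall j, leq (size g`_j) Lx) ->
        run hv P (encode Lx Ly f ++ encode Lx Ly g) out
        = encode (2 * Lx - 1) (2 * Ly - 1) (f * g)].
Proof.
exists 25 => Lx Ly Lx_gt0 Ly_gt0 N M; split.
  move=> R F F_size F_coef_size b; split; first exact: size_horner_scaleXn.
  rewrite /revsubst; apply: (@size_sum_scaleXn _ Ly (N * (Ly - 1)) Lx (fun j => F`_j)
    (fun j => ((-1) ^+ b) ^+ j) (fun j => N * (Ly - 1 - j))%N) => // j _.
  by apply: leq_mul => //; apply: leq_subr.
have [mul_okP n_mulP n_addsubP n_halfP] := kronecker_prog_counts Lx Ly.
have [cost_addsub cost_half] := kronecker_cost Lx_gt0 Ly_gt0.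
exists (kronecker_prog Lx Ly), (kronecker_out Lx Ly); split=> //.
- by rewrite n_mulP.
- by rewrite n_addsubP.
- by rewrite n_halfP.
(* Injectivity of doubling follows from the specification of hv. *)
move=> R _ hv hvK f g f_size f_coef_size g_size g_coef_size.
exact: run_kronecker.
Qed.
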